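(* Let $1 \leq p \leq q < \infty$ and let $\lambda, \mu, \nu, \alpha, \beta$ be real numbers with $\beta + 1 > -q\nu$. Let $\mathcal{H}_{\lambda,\mu,\nu}$ be the discrete Hilbert-type operator $$\mathcal{H}_{\lambda,\mu,\nu}(a)(n) = \sum_{m=1}^{\infty} \frac{m^{\mu} n^{\nu}}{(m+n)^{\lambda}} a_m, \quad n \in \mathbb{N},$$ acting on real sequences $a = \{a_m\}_{m=1}^\infty$. Then $\mathcal{H}_{\lambda,\mu,\nu}$ is bounded from $l^p_\alpha$ to $l^q_\beta$ if and only if $$\lambda \geq \mu + \nu + 1 + \frac{\beta+1}{q} - \frac{\alpha+1}{p} \quad \text{and} \quad \beta + 1 < q(\lambda - \nu).$$
   Context: For $1 \le p < \infty$ and $\theta \in \mathbb{R}$, $l^p_\theta$ denotes the space of real sequences $a=\{a_m\}_{m=1}^\infty$ with $\|a\|_{p,\theta} = \left(\sum_{m=1}^\infty m^\theta |a_m|^p\right)^{1/p} < \infty$. An operator $T$ is bounded from $l^p_\alpha$ to $l^q_\beta$ if for every $a \in l^p_\alpha$ the defining series converge, $Ta \in l^q_\beta$, and there is a constant $C$ with $\|Ta\|_{q,\beta} \le C \|a\|_{p,\alpha}$ for all $a \in l^p_\alpha$. *)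

From Stdlib Require Import Reals.
From Coquelicot Require Import Coquelicot.
Open Scope R_scope.

(* Real power of a nonnegative real, with the convention 0^r = 0
   (Stdlib's Rpower 0 r = 1, which is not the intended |a_m|^p). *)
Definition rpow (x r : R) : R :=
  if Req_EM_T x 0 then 0 else Rpower x r.

(* Sequences are functions nat -> R; only the entries a m with m >= 1 are used
   (the entry a 0 is irrelevant). *)

Definition wterm (p theta : R) (a : nat -> R) (k : nat) : R :=
  Rpower (INR (S k)) theta * rpow (Rabs (a (S k))) p.

Definition in_lp (p theta : R) (a : nat -> R) : Prop :=
  ex_series (wterm p theta a).

Definition lp_norm (p theta : R) (a : nat -> R) : R :=
  rpow (Series (wterm p theta a)) (1 / p).

Definition H_term (lam mu nu : R) (a : nat -> R) (n k : nat) : R :=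
  Rpower (INR (S k)) mu * Rpower (INR n) nu / Rpower (INR (S k) + INR n) lam
  * a (S k).

Definition Hop (lam mu nu : R) (a : nat -> R) (n : nat) : R :=
  Series (H_term lam mu nu a n).

Definition H_bounded (lam mu nu p alpha q beta : R) : Prop :=
  (forall a : nat -> R, in_lp p alpha a ->
     (forall n : nat, (1 <= n)%nat -> ex_series (H_term lam mu nu a n)) /\
     in_lp q beta (Hop lam mu nu a)) /\
  exists C : R, forall a : nat -> R, in_lp p alpha a ->
     lp_norm q beta (Hop lam mu nu a) <= C * lp_norm p alpha a.

From Stdlib Require Import Reals Lra Lia.
From Coquelicot Require Import Coquelicot.
Open Scope R_scope.

(* Sufficiency is a Schur test. With [b_m = m^alpha |a_m|^p], the quantity
   [n^(beta/q) |H a (n)|] is dominated by [sum_m K(m,n) b_m^(1/p)], where [K = k^s],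
   [s = 1 - 1/p + 1/q] and [k(m,n) = m^g n^d (m+n)^(-(g+d+1))] is homogeneous of degree -1.
   Splitting [K b^(1/p) = u^(1/q) v^(1-1/p) b^(1/p-1/q)] with power weights [m^(+-z)],
   Hölder's inequality in [m] and the bound [sum_m m^a n^b (m+n)^(-(a+b+1)) <= C]
   ([a > -1], [b > 0]) in both variables give [sum_n (sum_m K b^(1/p))^q <= C (sum b)^(q/p)];
   the hypotheses on the exponents are exactly what is needed for a suitable [z] to exist.
   Necessity: the unit sequence at [m = 1] is mapped to a sequence of order [n^(nu-lam)], and
   [a_m = m^(-(alpha+1)/p - eps)] to one bounded below by [c n^(-(beta+1)/q)] (from the block
   [n < m <= 2n]); in both cases [sum_n n^beta |H a (n)|^q] dominates the harmonic series. *)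

(** * Series of nonnegative terms *)

Lemma INR_S_gt0 (k : nat) : 0 < INR (S k).
Proof. apply lt_0_INR. lia. Qed.

Lemma sum_n_le_Sn (u : nat -> R) :
  (forall k, 0 <= u k) -> forall N, sum_n u N <= sum_n u (S N).
Proof. intros Hu N. rewrite sum_Sn. unfold plus; simpl. specialize (Hu (S N)). lra. Qed.

Lemma sum_n_ge0 (u : nat -> R) : (forall k, 0 <= u k) -> forall N, 0 <= sum_n u N.
Proof.
  intros Hu N. induction N as [|N IH].
  - rewrite sum_O. apply Hu.
  - eapply Rle_trans; [exact IH | apply sum_n_le_Sn, Hu].
Qed.

Lemma sum_n_ge_term (u : nat -> R) :
  (forall k, 0 <= u k) -> forall N k, (k <= N)%nat -> u k <= sum_n u N.
Proof.
  intros Hu N k Hk. induction Hk as [|N Hk IH].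
  - destruct k as [|k]; [rewrite sum_O; lra|].
    rewrite sum_Sn. unfold plus; simpl. pose proof (sum_n_ge0 u Hu k). lra.
  - eapply Rle_trans; [exact IH | apply sum_n_le_Sn, Hu].
Qed.

Lemma sum_n_le_telescoping (u Phi : nat -> R) :
  u O <= Phi 1%nat -> (forall k, u (S k) <= Phi (S (S k)) - Phi (S k)) ->
  forall M, sum_n u M <= Phi (S M).
Proof.
  intros Hbase Hstep M. induction M as [|M IH].
  - now rewrite sum_O.
  - rewrite sum_Sn. unfold plus; simpl. specialize (Hstep M). lra.
Qed.

Lemma ex_series_of_sum_n_le (u : nat -> R) (M : R) :
  (forall k, 0 <= u k) -> (forall N, sum_n u N <= M) -> ex_series u.
Proof.
  intros Hu HM.
  destruct (ex_finite_lim_seq_incr (sum_n u) M (sum_n_le_Sn u Hu) HM) as [l Hl].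
  now exists l.
Qed.

Lemma ex_series_le_nonneg (u v : nat -> R) :
  (forall k, 0 <= u k <= v k) -> ex_series v -> ex_series u.
Proof.
  intros Huv. apply (@ex_series_le R_AbsRing R_CompleteNormedModule).
  intros k. change (Rabs (u k) <= v k). rewrite Rabs_pos_eq; apply Huv.
Qed.

Lemma sum_n_le_Series (u : nat -> R) :
  (forall k, 0 <= u k) -> ex_series u -> forall N, sum_n u N <= Series u.
Proof.
  intros Hu Hex. apply is_lim_seq_incr_compare.
  - apply Series_correct, Hex.
  - apply sum_n_le_Sn, Hu.
Qed.

Lemma Series_ge0 (u : nat -> R) : (forall k, 0 <= u k) -> ex_series u -> 0 <= Series u.
Proof.
  intros Hu Hex. eapply Rle_trans; [apply (sum_n_ge0 u Hu O) | apply sum_n_le_Series; auto].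
Qed.

Lemma Series_le_of_sum_n_le (u : nat -> R) (M : R) :
  (forall k, 0 <= u k) -> (forall N, sum_n u N <= M) -> Series u <= M.
Proof.
  intros Hu HM.
  apply (is_lim_seq_le (sum_n u) (fun _ => M) (Series u) M HM).
  - apply Series_correct, (ex_series_of_sum_n_le u M Hu HM).
  - apply is_lim_seq_const.
Qed.

Lemma sum_n_Rmult_l (c : R) (u : nat -> R) N :
  sum_n (fun k => c * u k) N = c * sum_n u N.
Proof. exact (sum_n_mult_l c u N). Qed.

Lemma sum_n_Series (u : nat -> nat -> R) N :
  (forall j, ex_series (u j)) ->
  sum_n (fun j => Series (u j)) N = Series (fun k => sum_n (fun j => u j k) N).
Proof.
  intros Hu.
  enough (ex_series (fun k => sum_n (fun j => u j k) N) /\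
          sum_n (fun j => Series (u j)) N = Series (fun k => sum_n (fun j => u j k) N))
    by tauto.
  induction N as [|N [Hex IH]].
  - rewrite sum_O. split.
    + eapply ex_series_ext; [|apply (Hu O)]. intros k. now rewrite sum_O.
    + apply Series_ext. intros k. now rewrite sum_O.
  - rewrite sum_Sn, IH. unfold plus; simpl. split.
    + eapply ex_series_ext; [|apply (ex_series_plus _ _ Hex (Hu (S N)))].
      intros k. now rewrite sum_Sn.
    + rewrite <- Series_plus by auto. apply Series_ext. intros k. now rewrite sum_Sn.
Qed.

Lemma sum_n_Rplus (u v : nat -> R) N :
  sum_n (fun k => u k + v k) N = sum_n u N + sum_n v N.
Proof. exact (sum_n_plus u v N). Qed.

Lemma sum_n_eq_0_of_vanishing (u w : nat -> R) N :
  (forall k, 0 <= w k) -> sum_n w N = 0 -> (forall k, w k = 0 -> u k = 0) -> sum_n u N = 0.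
Proof.
  intros Hw Hw0 Hu. rewrite (sum_n_ext_loc u (fun _ => 0)).
  - exact (sum_n_m_const_zero O N).
  - intros k Hk. apply Hu. pose proof (sum_n_ge_term w Hw N k Hk). pose proof (Hw k). lra.
Qed.

Lemma ln_sub_le (x y : R) : 0 < x -> 0 < y -> ln y - ln x <= y / x - 1.
Proof.
  intros Hx Hy.
  assert (Hyx : 0 < y / x) by (apply Rdiv_lt_0_compat; auto).
  pose proof (exp_ineq1_le (ln (y / x))) as Hexp. rewrite exp_ln in Hexp by exact Hyx.
  unfold Rdiv in *. rewrite ln_mult, ln_Rinv in Hexp by (auto; apply Rinv_0_lt_compat; auto).
  lra.
Qed.

Lemma harmonic_ge_ln N : ln (INR (S (S N))) <= sum_n (fun j => / INR (S j)) N.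
Proof.
  induction N as [|N IH].
  - rewrite sum_O. simpl. pose proof (ln_sub_le 1 (1 + 1)) as Hln. rewrite ln_1 in Hln. lra.
  - rewrite sum_Sn. unfold plus; simpl.
    pose proof (INR_S_gt0 (S N)) as Hn.
    pose proof (ln_sub_le (INR (S (S N))) (INR (S (S (S N)))) Hn (INR_S_gt0 _)) as Hln.
    replace (INR (S (S (S N))) / INR (S (S N)) - 1) with (/ INR (S (S N))) in Hln
      by (rewrite (S_INR (S (S N))); field; lra).
    simpl in *. lra.
Qed.

Lemma harmonic_not_ex_series (u : nat -> R) (c : R) :
  0 < c -> (forall j, c / INR (S j) <= u j) -> ~ ex_series u.
Proof.
  intros Hc Hu Hex.
  assert (Hu0 : forall k, 0 <= u k).
  { intros k. eapply Rle_trans; [|apply Hu].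
    apply Rlt_le, Rdiv_lt_0_compat; [exact Hc | apply INR_S_gt0]. }
  destruct (INR_unbounded (exp (Series u / c))) as [N HN].
  assert (Hlog : Series u / c < ln (INR (S (S N)))).
  { rewrite <- (ln_exp (Series u / c)). apply ln_increasing; [apply exp_pos|].
    rewrite !S_INR. pose proof (pos_INR N). lra. }
  assert (Hsum : c * sum_n (fun j => / INR (S j)) N <= Series u).
  { eapply Rle_trans; [|apply (sum_n_le_Series u Hu0 Hex N)].
    rewrite <- sum_n_Rmult_l. apply sum_n_m_le. intros k. apply Hu. }
  pose proof (harmonic_ge_ln N) as Hharm.
  apply (Rmult_lt_compat_l c) in Hlog; auto.
  replace (c * (Series u / c)) with (Series u) in Hlog by (field; lra).
  pose proof (Rmult_le_compat_l c _ _ (Rlt_le _ _ Hc) Hharm). lra.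
Qed.

(** * Real powers *)

Lemma Rpower_gt0 (x e : R) : 0 < Rpower x e.
Proof. apply exp_pos. Qed.

Lemma Rpower_base_1 (e : R) : Rpower 1 e = 1.
Proof. unfold Rpower. now rewrite ln_1, Rmult_0_r, exp_0. Qed.

Lemma Rpower_sub_1 (m t : R) : 0 < m -> Rpower m (t - 1) = Rpower m t / m.
Proof. intros Hm. unfold Rminus. now rewrite Rpower_plus, Rpower_Ropp, Rpower_1. Qed.

Lemma exp_le_compat (x y : R) : x <= y -> exp x <= exp y.
Proof. intros [H|H]; [left; now apply exp_increasing | now rewrite H; right]. Qed.

Lemma ln_comparable (K x y : R) :
  0 < x -> x <= y <= K * x -> 0 <= ln y - ln x <= ln K.
Proof.
  intros Hx [Hxy HyK]. pose proof (ln_le x y Hx Hxy).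
  pose proof (ln_le y (K * x) ltac:(lra) HyK).
  assert (HK : 0 < K) by (apply (Rmult_lt_reg_r x); lra).
  rewrite ln_mult in * by lra. lra.
Qed.

Lemma Rpower_comparable_r (K x y e : R) :
  0 < x -> x <= y <= K * x -> Rpower y e <= Rpower K (Rabs e) * Rpower x e.
Proof.
  intros Hx Hxy. pose proof (ln_comparable K x y Hx Hxy).
  pose proof (Rle_abs e). pose proof (Rabs_pos e).
  unfold Rpower. rewrite <- exp_plus. apply exp_le_compat. nra.
Qed.

Lemma Rpower_comparable_l (K x y e : R) :
  0 < x -> x <= y <= K * x -> Rpower x e <= Rpower K (Rabs e) * Rpower y e.
Proof.
  intros Hx Hxy. pose proof (ln_comparable K x y Hx Hxy).
  pose proof (Rle_abs (- e)). rewrite Rabs_Ropp in *. pose proof (Rabs_pos e).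
  unfold Rpower. rewrite <- exp_plus. apply exp_le_compat. nra.
Qed.

Lemma Rpower_tangent_le (x y t : R) :
  0 < x -> 0 < y -> Rpower x t * (1 + t * (ln y - ln x)) <= Rpower y t.
Proof.
  intros Hx Hy. unfold Rpower.
  replace (t * ln y) with (t * ln x + t * (ln y - ln x)) by ring.
  rewrite exp_plus. apply Rmult_le_compat_l; [left; apply exp_pos | apply exp_ineq1_le].
Qed.

Lemma Rpower_pred_sub_ge_neg (m t : R) :
  1 < m -> t < 0 -> - t * Rpower m (t - 1) <= Rpower (m - 1) t - Rpower m t.
Proof.
  intros Hm Ht. rewrite Rpower_sub_1 by lra.
  pose proof (Rpower_tangent_le m (m - 1) t ltac:(lra) ltac:(lra)) as Htan.
  pose proof (ln_sub_le m (m - 1) ltac:(lra) ltac:(lra)) as Hln.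
  replace ((m - 1) / m - 1) with (- / m) in Hln by (field; lra).
  pose proof (Rpower_gt0 m t). pose proof (Rinv_0_lt_compat m ltac:(lra)).
  assert (- t * / m <= t * (ln (m - 1) - ln m)) by nra.
  unfold Rdiv. nra.
Qed.

Lemma Rpower_sub_pred_ge_pos (m t : R) :
  1 < m -> 0 < t -> t / (1 + t) * Rpower m (t - 1) <= Rpower m t - Rpower (m - 1) t.
Proof.
  intros Hm Ht. rewrite Rpower_sub_1 by lra.
  pose proof (Rpower_tangent_le (m - 1) m t ltac:(lra) ltac:(lra)) as Htan.
  pose proof (ln_sub_le m (m - 1) ltac:(lra) ltac:(lra)) as Hln.
  replace ((m - 1) / m - 1) with (- / m) in Hln by (field; lra).
  set (P := Rpower m t) in *. set (Q := Rpower (m - 1) t) in *.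
  assert (HQ : 0 < Q) by apply Rpower_gt0.
  assert (HPQ : Q * (m + t) <= P * m).
  { replace (Q * (m + t)) with (Q * (1 + t * / m) * m) by (field; lra).
    apply Rmult_le_compat_r; [lra|]. eapply Rle_trans; [|exact Htan].
    apply Rmult_le_compat_l; nra. }
  replace (t / (1 + t) * (P / m)) with (P * t / ((1 + t) * m)) by (field; lra).
  apply (Rmult_le_reg_r ((1 + t) * m)); [nra|].
  unfold Rdiv. rewrite Rmult_assoc, Rinv_l, Rmult_1_r by nra.
  assert (Q <= P) by nra.
  assert (0 <= t * (m - 1) * (P - Q)) by (apply Rmult_le_pos; nra).
  nra.
Qed.

Lemma rpow_0_l (e : R) : rpow 0 e = 0.
Proof. unfold rpow. destruct (Req_EM_T 0 0); [reflexivity | congruence]. Qed.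

Lemma rpow_Rpower (x e : R) : 0 < x -> rpow x e = Rpower x e.
Proof. intros Hx. unfold rpow. destruct (Req_EM_T x 0); [lra | reflexivity]. Qed.

Lemma rpow_ge0 (x e : R) : 0 <= rpow x e.
Proof. unfold rpow. destruct (Req_EM_T x 0); [lra | left; apply Rpower_gt0]. Qed.

Lemma rpow_le_compat (x y e : R) : 0 <= e -> 0 <= x <= y -> rpow x e <= rpow y e.
Proof.
  intros He [Hx Hxy]. destruct (Req_dec x 0) as [->|Hx0].
  - rewrite rpow_0_l. apply rpow_ge0.
  - rewrite !rpow_Rpower by lra. apply Rle_Rpower_l; lra.
Qed.

Lemma rpow_mult_distr (x y e : R) :
  0 <= x -> 0 <= y -> rpow (x * y) e = rpow x e * rpow y e.
Proof.
  intros Hx Hy. destruct (Req_dec x 0) as [->|Hx0].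
  { now rewrite Rmult_0_l, !rpow_0_l, Rmult_0_l. }
  destruct (Req_dec y 0) as [->|Hy0].
  { now rewrite Rmult_0_r, !rpow_0_l, Rmult_0_r. }
  rewrite !rpow_Rpower by nra. now rewrite Rpower_mult_distr by lra.
Qed.

Lemma rpow_rpow (x a b : R) : 0 <= x -> rpow (rpow x a) b = rpow x (a * b).
Proof.
  intros Hx. destruct (Req_dec x 0) as [->|Hx0]; [now rewrite !rpow_0_l|].
  rewrite !(rpow_Rpower x) by lra. rewrite rpow_Rpower by apply Rpower_gt0.
  apply Rpower_mult.
Qed.

Lemma rpow_1 (x : R) : 0 <= x -> rpow x 1 = x.
Proof.
  intros Hx. destruct (Req_dec x 0) as [->|Hx0]; [apply rpow_0_l|].
  rewrite rpow_Rpower by lra. apply Rpower_1; lra.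
Qed.

Lemma rpow_plus (x a b : R) : 0 <= x -> rpow x (a + b) = rpow x a * rpow x b.
Proof.
  intros Hx. destruct (Req_dec x 0) as [->|Hx0]; [rewrite !rpow_0_l; ring|].
  rewrite !rpow_Rpower by lra. apply Rpower_plus.
Qed.

(** * Hölder's inequality and the Schur test *)

Lemma rpow_amgm3 (a b c x y z : R) :
  0 <= a -> 0 <= b -> 0 <= c -> a + b + c = 1 -> 0 <= x -> 0 <= y -> 0 <= z ->
  rpow x a * rpow y b * rpow z c <= a * x + b * y + c * z.
Proof.
  intros Ha Hb Hc Habc Hx Hy Hz.
  destruct (Req_dec x 0) as [->|Hx0]; [rewrite rpow_0_l; nra|].
  destruct (Req_dec y 0) as [->|Hy0]; [rewrite rpow_0_l; nra|].
  destruct (Req_dec z 0) as [->|Hz0]; [rewrite rpow_0_l; nra|].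
  set (S := a * x + b * y + c * z).
  assert (HS : 0 < S).
  { set (mn := Rmin x (Rmin y z)).
    assert (0 < mn) by (apply Rmin_glb_lt; [|apply Rmin_glb_lt]; lra).
    assert (mn <= x /\ mn <= y /\ mn <= z) as (? & ? & ?).
    { unfold mn. pose proof (Rmin_l x (Rmin y z)). pose proof (Rmin_r x (Rmin y z)).
      pose proof (Rmin_l y z). pose proof (Rmin_r y z). lra. }
    assert (a * mn + b * mn + c * mn = mn) by (rewrite <- !Rmult_plus_distr_r, Habc; ring).
    assert (a * mn <= a * x) by (apply Rmult_le_compat_l; lra).
    assert (b * mn <= b * y) by (apply Rmult_le_compat_l; lra).
    assert (c * mn <= c * z) by (apply Rmult_le_compat_l; lra).
    unfold S. lra. }
  (* concavity of [ln]: its tangent at [S] lies above it *)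
  pose proof (ln_sub_le S x HS ltac:(lra)). pose proof (ln_sub_le S y HS ltac:(lra)).
  pose proof (ln_sub_le S z HS ltac:(lra)).
  assert (Hlog : a * ln x + b * ln y + c * ln z <= ln S).
  { apply Rle_trans with (a * (ln S + x / S - 1) + b * (ln S + y / S - 1) + c * (ln S + z / S - 1)).
    - apply Rplus_le_compat; [apply Rplus_le_compat|]; apply Rmult_le_compat_l; lra.
    - right. replace (a * (ln S + x / S - 1) + b * (ln S + y / S - 1) + c * (ln S + z / S - 1))
        with ((a + b + c) * (ln S - 1) + (a * x + b * y + c * z) / S) by (field; lra).
      change (a * x + b * y + c * z) with S. rewrite Habc. field. lra. }
  rewrite !rpow_Rpower by lra. unfold Rpower. rewrite <- !exp_plus, <- (exp_ln S) by exact HS.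
  apply exp_le_compat. lra.
Qed.

Lemma sum_n_holder3 (a b c : R) (x y z : nat -> R) N :
  0 <= a -> 0 <= b -> 0 <= c -> a + b + c = 1 ->
  (forall k, 0 <= x k) -> (forall k, 0 <= y k) -> (forall k, 0 <= z k) ->
  sum_n (fun k => rpow (x k) a * rpow (y k) b * rpow (z k) c) N
  <= rpow (sum_n x N) a * rpow (sum_n y N) b * rpow (sum_n z N) c.
Proof.
  intros Ha Hb Hc Habc Hx Hy Hz.
  set (X := sum_n x N). set (Y := sum_n y N). set (Z := sum_n z N).
  set (P := rpow X a * rpow Y b * rpow Z c).
  assert (HP : 0 <= P) by (apply Rmult_le_pos; [apply Rmult_le_pos|]; apply rpow_ge0).
  assert (HX : 0 <= X) by apply (sum_n_ge0 x Hx).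
  assert (HY : 0 <= Y) by apply (sum_n_ge0 y Hy).
  assert (HZ : 0 <= Z) by apply (sum_n_ge0 z Hz).
  destruct (Req_dec X 0) as [HX0|HX0].
  { rewrite (sum_n_eq_0_of_vanishing _ x N Hx HX0); [exact HP|].
    intros k ->. rewrite rpow_0_l. ring. }
  destruct (Req_dec Y 0) as [HY0|HY0].
  { rewrite (sum_n_eq_0_of_vanishing _ y N Hy HY0); [exact HP|].
    intros k ->. rewrite rpow_0_l. ring. }
  destruct (Req_dec Z 0) as [HZ0|HZ0].
  { rewrite (sum_n_eq_0_of_vanishing _ z N Hz HZ0); [exact HP|].
    intros k ->. rewrite rpow_0_l. ring. }
  (* normalise each sequence by its sum and apply the weighted AM-GM termwise *)
  apply Rle_trans with
    (sum_n (fun k => P * a / X * x k + (P * b / Y * y k + P * c / Z * z k)) N).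
  - apply sum_n_m_le. intros k.
    replace (x k) with (X * (x k / X)) by (field; lra).
    replace (y k) with (Y * (y k / Y)) by (field; lra).
    replace (z k) with (Z * (z k / Z)) by (field; lra).
    assert (0 <= x k / X) by (apply Rdiv_le_0_compat; [apply Hx | lra]).
    assert (0 <= y k / Y) by (apply Rdiv_le_0_compat; [apply Hy | lra]).
    assert (0 <= z k / Z) by (apply Rdiv_le_0_compat; [apply Hz | lra]).
    rewrite !rpow_mult_distr by lra.
    pose proof (rpow_amgm3 a b c (x k / X) (y k / Y) (z k / Z) Ha Hb Hc Habc
                  ltac:(assumption) ltac:(assumption) ltac:(assumption)).
    replace (P * a / X * (X * (x k / X)) + (P * b / Y * (Y * (y k / Y)) + P * c / Z * (Z * (z k / Z))))
      with (P * (a * (x k / X) + b * (y k / Y) + c * (z k / Z))) by (field; lra).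
    replace (rpow X a * rpow (x k / X) a * (rpow Y b * rpow (y k / Y) b) * (rpow Z c * rpow (z k / Z) c))
      with (P * (rpow (x k / X) a * rpow (y k / Y) b * rpow (z k / Z) c)) by (unfold P; ring).
    apply Rmult_le_compat_l; assumption.
  - rewrite !sum_n_Rplus, !sum_n_Rmult_l. fold X Y Z. right.
    transitivity ((a + b + c) * P); [field; lra | rewrite Habc; unfold P; ring].
Qed.

Lemma holder_row_bound (q th r A : R) (x y b : nat -> R) :
  1 <= q -> 0 <= th -> 0 <= r -> 1 / q + th + r = 1 ->
  (forall k, 0 <= x k) -> (forall k, 0 <= y k) -> (forall k, 0 <= b k) ->
  ex_series x -> ex_series b -> (forall M, sum_n y M <= A) ->
  ex_series (fun k => rpow (x k) (1 / q) * rpow (y k) th * rpow (b k) r) /\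
  rpow (Series (fun k => rpow (x k) (1 / q) * rpow (y k) th * rpow (b k) r)) q
  <= rpow A (th * q) * rpow (Series b) (r * q) * Series x.
Proof.
  intros Hq Hth Hr Hexps Hx Hy Hb Hxex Hbex HA.
  set (F := fun k => rpow (x k) (1 / q) * rpow (y k) th * rpow (b k) r).
  assert (HF : forall k, 0 <= F k)
    by (intros; unfold F; apply Rmult_le_pos; [apply Rmult_le_pos|]; apply rpow_ge0).
  assert (Hq' : 0 <= 1 / q) by (apply Rdiv_le_0_compat; lra).
  assert (HA0 : 0 <= A) by (eapply Rle_trans; [apply (sum_n_ge0 y Hy O) | apply HA]).
  assert (HFsum : forall M, sum_n F M <= rpow (Series x) (1 / q) * rpow A th * rpow (Series b) r).
  { intros M. eapply Rle_trans; [apply sum_n_holder3; auto|].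
    apply Rmult_le_compat; [apply Rmult_le_pos; apply rpow_ge0 | apply rpow_ge0 | |].
    - apply Rmult_le_compat; try apply rpow_ge0.
      + apply rpow_le_compat; auto. split; [apply sum_n_ge0; auto | apply sum_n_le_Series; auto].
      + apply rpow_le_compat; auto. split; [apply sum_n_ge0; auto | apply HA].
    - apply rpow_le_compat; auto. split; [apply sum_n_ge0; auto | apply sum_n_le_Series; auto]. }
  split; [exact (ex_series_of_sum_n_le _ _ HF HFsum)|].
  eapply Rle_trans.
  - apply rpow_le_compat; [lra|]. split.
    + apply Series_ge0; [exact HF | exact (ex_series_of_sum_n_le _ _ HF HFsum)].
    + exact (Series_le_of_sum_n_le _ _ HF HFsum).
  - rewrite !rpow_mult_distr by (try apply Rmult_le_pos; apply rpow_ge0).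
    rewrite !rpow_rpow by (auto; apply Series_ge0; auto).
    replace (1 / q * q) with 1 by (field; lra).
    rewrite rpow_1 by (apply Series_ge0; auto). right; ring.
Qed.

Lemma holder_schur_bound (q th r A X : R) (u v : nat -> nat -> R) (b : nat -> R) :
  1 <= q -> 0 <= th -> 0 <= r -> 1 / q + th + r = 1 ->
  (forall k j, 0 <= u k j) -> (forall k j, 0 <= v k j) -> (forall k, 0 <= b k) ->
  ex_series b ->
  (forall j M, sum_n (fun k => v k j) M <= A) ->
  (forall k N, sum_n (fun j => u k j) N <= X * b k) ->
  (forall j, ex_series (fun k => rpow (u k j) (1 / q) * rpow (v k j) th * rpow (b k) r)) /\
  forall N,
    sum_n (fun j => rpow (Series (fun k => rpow (u k j) (1 / q) * rpow (v k j) th * rpow (b k) r)) q) N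
    <= rpow A (th * q) * X * rpow (Series b) (r * q + 1).
Proof.
  intros Hq Hth Hr Hexps Hu Hv Hb Hbex HA HX.
  assert (Hex_u : forall j, ex_series (fun k => u k j)).
  { intros j. apply (ex_series_le_nonneg _ (fun k => X * b k)).
    - intros k. split; [apply Hu|].
      eapply Rle_trans; [apply (sum_n_ge_term (fun j => u k j) (Hu k) j j (le_n j)) | apply HX].
    - apply (ex_series_scal_l X b Hbex). }
  pose proof (fun j => holder_row_bound q th r A (fun k => u k j) (fun k => v k j) b
                         Hq Hth Hr Hexps (fun k => Hu k j) (fun k => Hv k j) Hb (Hex_u j) Hbex (HA j))
    as Hrow.
  split; [intros j; apply Hrow|]. intros N.
  assert (HB : 0 <= Series b) by (apply Series_ge0; auto).
  eapply Rle_trans; [apply sum_n_m_le; intros j; apply Hrow|].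
  fold (sum_n (fun j => rpow A (th * q) * rpow (Series b) (r * q) * Series (fun k => u k j)) N).
  rewrite sum_n_Rmult_l, (sum_n_Series (fun j k => u k j)) by exact Hex_u.
  assert (HUsum : Series (fun k => sum_n (fun j => u k j) N) <= X * Series b).
  { rewrite <- Series_scal_l. apply Series_le.
    - intros k. split; [apply sum_n_ge0; auto | apply HX].
    - apply (ex_series_scal_l X b Hbex). }
  rewrite rpow_plus, rpow_1 by exact HB.
  pose proof (rpow_ge0 A (th * q)). pose proof (rpow_ge0 (Series b) (r * q)).
  apply Rle_trans with (rpow A (th * q) * rpow (Series b) (r * q) * (X * Series b)); [|right; ring].
  apply Rmult_le_compat_l; [apply Rmult_le_pos|]; auto.
Qed.

(** * Sums of power kernels *)

Lemma sum_Rpower_le (s : R) :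
  s < 0 -> forall M, sum_n (fun k => Rpower (INR (S k)) (s - 1)) M <= 1 - 1 / s.
Proof.
  intros Hs M.
  eapply Rle_trans.
  - apply (sum_n_le_telescoping _ (fun m => 1 + (1 - Rpower (INR m) s) / - s)).
    + simpl. rewrite !Rpower_base_1. right. field. lra.
    + intros k. pose proof (Rpower_pred_sub_ge_neg (INR (S (S k))) s) as Hdec.
      replace (INR (S (S k)) - 1) with (INR (S k)) in Hdec by (rewrite (S_INR (S k)); ring).
      apply (Rmult_le_reg_l (- s)); [lra|].
      replace (- s * (1 + (1 - Rpower (INR (S (S k))) s) / - s - (1 + (1 - Rpower (INR (S k)) s) / - s)))
        with (Rpower (INR (S k)) s - Rpower (INR (S (S k))) s) by (field; lra).
      apply Hdec; [rewrite !S_INR; pose proof (pos_INR k); lra | exact Hs].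
  - pose proof (Rpower_gt0 (INR (S M)) s).
    apply (Rmult_le_reg_l (- s)); [lra|].
    replace (- s * (1 + (1 - Rpower (INR (S M)) s) / - s)) with (- s + 1 - Rpower (INR (S M)) s)
      by (field; lra).
    replace (- s * (1 - 1 / s)) with (- s + 1) by (field; lra). lra.
Qed.

Lemma Rpower_ge1 (x e : R) : 1 <= x -> 0 <= e -> 1 <= Rpower x e.
Proof. intros Hx He. rewrite <- (Rpower_O x) at 1 by lra. now apply Rle_Rpower. Qed.

Lemma kernel_term_head_le (a c m x : R) :
  -1 < a -> 1 < m -> m <= x ->
  Rpower m a * Rpower (m + x) (- c)
  <= Rpower 2 (Rabs c) * (a + 2) / (a + 1) * Rpower x (- c)
     * (Rpower m (a + 1) - Rpower (m - 1) (a + 1)).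
Proof.
  intros Ha Hm Hmx. set (E := Rpower 2 (Rabs c)).
  pose proof (Rpower_comparable_r 2 x (m + x) (- c) ltac:(lra) ltac:(lra)) as Hcmp.
  rewrite Rabs_Ropp in Hcmp. fold E in Hcmp.
  pose proof (Rpower_sub_pred_ge_pos m (a + 1) Hm ltac:(lra)) as Hinc.
  replace (a + 1 - 1) with a in Hinc by ring.
  pose proof (Rpower_gt0 m a). pose proof (Rpower_gt0 x (- c)). pose proof (Rpower_gt0 2 (Rabs c)).
  apply Rle_trans with (E * Rpower x (- c) * Rpower m a).
  - rewrite (Rmult_comm (E * _)). apply Rmult_le_compat_l; lra.
  - replace (E * (a + 2) / (a + 1) * Rpower x (- c) * (Rpower m (a + 1) - Rpower (m - 1) (a + 1)))
      with (E * Rpower x (- c) * ((a + 2) / (a + 1) * (Rpower m (a + 1) - Rpower (m - 1) (a + 1))))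
      by (field; lra).
    apply Rmult_le_compat_l; [unfold E; nra|].
    replace (Rpower m a) with ((a + 2) / (a + 1) * ((a + 1) / (1 + (a + 1)) * Rpower m a))
      by (field; lra).
    apply Rmult_le_compat_l; [apply Rlt_le, Rdiv_lt_0_compat; lra | exact Hinc].
Qed.

Lemma kernel_term_tail_le (a c m x : R) :
  a + 1 < c -> 1 < m -> 0 < x <= m ->
  Rpower m a * Rpower (m + x) (- c)
  <= Rpower 2 (Rabs c) / (c - a - 1) * (Rpower (m - 1) (a + 1 - c) - Rpower m (a + 1 - c)).
Proof.
  intros Hc Hm Hx. set (E := Rpower 2 (Rabs c)).
  pose proof (Rpower_comparable_r 2 m (m + x) (- c) ltac:(lra) ltac:(lra)) as Hcmp.
  rewrite Rabs_Ropp in Hcmp. fold E in Hcmp.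
  pose proof (Rpower_pred_sub_ge_neg m (a + 1 - c) Hm ltac:(lra)) as Hdec.
  replace (a + 1 - c - 1) with (a + - c) in Hdec by ring. rewrite Rpower_plus in Hdec.
  pose proof (Rpower_gt0 m a). pose proof (Rpower_gt0 m (- c)). pose proof (Rpower_gt0 2 (Rabs c)).
  apply Rle_trans with (E * (Rpower m a * Rpower m (- c))).
  - apply Rle_trans with (Rpower m a * (E * Rpower m (- c))); [apply Rmult_le_compat_l; lra|].
    right. ring.
  - replace (E / (c - a - 1) * (Rpower (m - 1) (a + 1 - c) - Rpower m (a + 1 - c)))
      with (E * ((Rpower (m - 1) (a + 1 - c) - Rpower m (a + 1 - c)) / (c - a - 1)))
      by (field; lra).
    apply Rmult_le_compat_l; [unfold E; lra|].
    apply (Rmult_le_reg_l (c - a - 1)); [lra|].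
    replace ((c - a - 1) * ((Rpower (m - 1) (a + 1 - c) - Rpower m (a + 1 - c)) / (c - a - 1)))
      with (Rpower (m - 1) (a + 1 - c) - Rpower m (a + 1 - c)) by (field; lra).
    nra.
Qed.

Lemma sum_kernel_le (a c : R) :
  -1 < a -> a + 1 < c -> exists K, 0 < K /\
  forall n : nat, (1 <= n)%nat -> forall M,
    sum_n (fun k => Rpower (INR (S k)) a * Rpower (INR (S k) + INR n) (- c)) M
    <= K * Rpower (INR n) (a + 1 - c).
Proof.
  intros Ha Hc. set (E := Rpower 2 (Rabs c)).
  assert (HE : 1 <= E) by (apply Rpower_ge1; [lra | apply Rabs_pos]).
  set (K1 := E * (a + 2) / (a + 1)). set (K2 := E / (c - a - 1)).
  assert (HK1 : E <= K1) by (unfold K1; apply (Rmult_le_reg_r (a + 1)); [lra|]; field_simplify; lra).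
  assert (HK2 : 0 < K2) by (apply Rdiv_lt_0_compat; lra).
  exists (K1 + K2). split; [lra|]. intros n Hn M.
  set (x := INR n). assert (Hx : 1 <= x) by (apply (le_INR 1) in Hn; exact Hn).
  (* telescoping majorant: for [m <= n] the summand is about [n^(-c) m^a], with partial sums
     about [n^(-c) m^(a+1)]; for [m > n] it is about [m^(a-c)], with tail about [n^(a+1-c)] *)
  set (Phi := fun m : nat =>
    if (m <=? n)%nat then K1 * Rpower x (- c) * Rpower (INR m) (a + 1)
    else K1 * Rpower x (a + 1 - c) + K2 * (Rpower x (a + 1 - c) - Rpower (INR m) (a + 1 - c))).
  assert (Hxs : Rpower x (- c) * Rpower x (a + 1) = Rpower x (a + 1 - c))
    by (rewrite <- Rpower_plus; f_equal; ring).
  assert (Phi_tail : forall m, (n <= m)%nat ->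
    Phi m = K1 * Rpower x (a + 1 - c) + K2 * (Rpower x (a + 1 - c) - Rpower (INR m) (a + 1 - c))).
  { intros m Hm. unfold Phi. destruct (Nat.leb_spec m n) as [Hmn|Hmn]; [|reflexivity].
    replace m with n by lia. fold x. rewrite Rmult_assoc, Hxs. ring. }
  apply Rle_trans with (Phi (S M)); [apply sum_n_le_telescoping|].
  - unfold Phi. destruct (Nat.leb_spec 1 n) as [_|]; [|lia]. simpl. rewrite !Rpower_base_1.
    pose proof (Rpower_comparable_r 2 x (1 + x) (- c) ltac:(lra) ltac:(lra)) as Hcmp.
    rewrite Rabs_Ropp in Hcmp. fold E in Hcmp. pose proof (Rpower_gt0 x (- c)). nra.
  - intros k. set (m := INR (S (S k))).
    assert (Hm : 1 < m) by (unfold m; rewrite !S_INR; pose proof (pos_INR k); lra).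
    assert (Hm1 : INR (S k) = m - 1) by (unfold m; rewrite (S_INR (S k)); ring).
    destruct (Nat.leb_spec (S (S k)) n) as [Hle|Hlt].
    + unfold Phi. destruct (Nat.leb_spec (S (S k)) n); [|lia].
      destruct (Nat.leb_spec (S k) n); [|lia]. fold m. rewrite Hm1.
      apply le_INR in Hle. fold x m in Hle.
      eapply Rle_trans; [apply kernel_term_head_le; lra|]. right. unfold K1, E. ring.
    + rewrite !Phi_tail by lia. fold m. rewrite Hm1.
      assert (Hxm : x <= m) by (unfold x, m; apply le_INR; lia).
      eapply Rle_trans; [apply kernel_term_tail_le; lra|]. right. unfold K2, E. ring.
  - pose proof (Rpower_gt0 x (a + 1 - c)). pose proof (Rpower_gt0 (INR (S M)) (a + 1 - c)).
    destruct (Nat.leb_spec (S M) n) as [Hle|Hlt].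
    + unfold Phi. destruct (Nat.leb_spec (S M) n); [|lia].
      apply le_INR in Hle. fold x in Hle. pose proof (Rpower_gt0 x (- c)).
      assert (Rpower (INR (S M)) (a + 1) <= Rpower x (a + 1))
        by (apply Rle_Rpower_l; [lra | split; [apply INR_S_gt0 | exact Hle]]).
      rewrite <- Hxs. pose proof (Rpower_gt0 x (a + 1)).
      apply Rle_trans with (K1 * Rpower x (- c) * Rpower x (a + 1)); [apply Rmult_le_compat_l; nra|].
      nra.
    + rewrite Phi_tail by lia. nra.
Qed.

Lemma sum_homogeneous_kernel_le (a b : R) :
  -1 < a -> 0 < b -> exists K, 0 < K /\
  forall n : nat, (1 <= n)%nat -> forall M,
    sum_n (fun k => Rpower (INR (S k)) a * Rpower (INR n) b
                    * Rpower (INR (S k) + INR n) (- (a + b + 1))) M <= K.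
Proof.
  intros Ha Hb. destruct (sum_kernel_le a (a + b + 1) Ha ltac:(lra)) as [K [HK Hsum]].
  exists K. split; [exact HK|]. intros n Hn M.
  rewrite (sum_n_ext _ (fun k => Rpower (INR n) b
             * (Rpower (INR (S k)) a * Rpower (INR (S k) + INR n) (- (a + b + 1)))))
    by (intros; simpl; ring).
  rewrite sum_n_Rmult_l.
  eapply Rle_trans; [apply Rmult_le_compat_l; [left; apply Rpower_gt0 | apply Hsum, Hn]|].
  rewrite Rmult_comm, Rmult_assoc, <- Rpower_plus.
  replace (a + 1 - (a + b + 1) + b) with 0 by ring.
  rewrite Rpower_O by (apply lt_0_INR; lia). lra.
Qed.

Lemma sum_kernel_ge (e l : R) : exists c0, 0 < c0 /\ forall j : nat,
  c0 * Rpower (INR (S j)) (e - l + 1)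
  <= sum_n (fun k => Rpower (INR (S k)) e * Rpower (INR (S k) + INR (S j)) (- l)) (j + S j).
Proof.
  set (E := Rpower 3 (Rabs e + Rabs l)). assert (HE : 0 < E) by apply Rpower_gt0.
  exists (/ E). split; [now apply Rinv_0_lt_compat|]. intros j.
  set (n := INR (S j)). assert (Hn : 0 < n) by apply INR_S_gt0.
  set (g := fun k => Rpower (INR (S k)) e * Rpower (INR (S k) + n) (- l)).
  assert (Hg : forall k, 0 <= g k)
    by (intros k; apply Rmult_le_pos; left; apply Rpower_gt0).
  (* the [n] terms [n < m <= 2 n], i.e. [k = j + S i] with [i <= j] *)
  assert (Hblock : forall i, (i <= j)%nat -> / E * Rpower n (e - l) <= g (j + S i)%nat).
  { intros i Hi. set (m := INR (S (j + S i))).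
    assert (Hm : n <= m <= 2 * n).
    { unfold m, n. rewrite !S_INR, plus_INR, S_INR. apply le_INR in Hi.
      pose proof (pos_INR i). lra. }
    pose proof (Rpower_comparable_l 3 n m e Hn ltac:(lra)) as Hme.
    pose proof (Rpower_comparable_l 3 n (m + n) (- l) Hn ltac:(lra)) as Hml.
    rewrite Rabs_Ropp in Hml.
    apply (Rmult_le_reg_l E); [exact HE|]. rewrite <- Rmult_assoc, Rinv_r, Rmult_1_l by lra.
    unfold Rminus. rewrite Rpower_plus. unfold E. rewrite Rpower_plus.
    apply Rle_trans with ((Rpower 3 (Rabs e) * Rpower m e) * (Rpower 3 (Rabs l) * Rpower (m + n) (- l))).
    - apply Rmult_le_compat; try (left; apply Rpower_gt0); assumption.
    - right. unfold g. fold m. ring. }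
  assert (Hcount : forall i, (i <= S j)%nat -> INR i * (/ E * Rpower n (e - l)) <= sum_n g (j + i)).
  { induction i as [|i IH]; intros Hi.
    - rewrite Rmult_0_l. apply sum_n_ge0, Hg.
    - rewrite Nat.add_succ_r, sum_Sn, S_INR. unfold plus; simpl.
      pose proof (IH ltac:(lia)). pose proof (Hblock i ltac:(lia)).
      rewrite Nat.add_succ_r in *. lra. }
  replace (e - l + 1) with ((e - l) + 1) by ring.
  rewrite Rpower_plus, Rpower_1 by exact Hn.
  pose proof (Hcount (S j) (le_n _)) as Hall. fold n in Hall. lra.
Qed.

(** * The kernel estimate *)

Definition hilbert_kernel (ga de la m n : R) : R :=
  Rpower m ga * Rpower n de * Rpower (m + n) (- la).

Lemma Rpower_monomial (x y z a b c s : R) :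
  Rpower (Rpower x a * Rpower y b * Rpower z c) s
  = Rpower x (a * s) * Rpower y (b * s) * Rpower z (c * s).
Proof.
  rewrite <- !Rpower_mult_distr by (try apply Rmult_lt_0_compat; apply Rpower_gt0).
  now rewrite !Rpower_mult.
Qed.

Lemma intervals_meet (a1 b1 a2 b2 : R) :
  a1 < b1 -> a2 < b2 -> a1 < b2 -> a2 < b1 -> exists z, a1 < z < b1 /\ a2 < z < b2.
Proof.
  intros. exists ((Rmax a1 a2 + Rmin b1 b2) / 2).
  unfold Rmax, Rmin. repeat destruct Rle_dec; lra.
Qed.

Lemma schur_exponent_exists (g d w : R) :
  0 <= w -> - d < g + 1 -> - d * (1 + w) < 1 -> - g * (1 + w) < w ->
  exists z, - d < z < g + 1 /\ - g < z * w < d + 1.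
Proof.
  intros Hw Hgd Hd Hg. destruct (Req_dec w 0) as [->|Hw0].
  - exists ((g + 1 - d) / 2). lra.
  - destruct (intervals_meet (- d) (g + 1) (- g / w) ((d + 1) / w)) as [z [Hz1 Hz2]].
    + exact Hgd.
    + apply Rmult_lt_compat_r; [apply Rinv_0_lt_compat|]; lra.
    + apply (Rmult_lt_reg_r w); [lra|]. field_simplify; lra.
    + apply (Rmult_lt_reg_r w); [lra|]. field_simplify; lra.
    + exists z. split; [exact Hz1|].
      split; [apply (Rmult_lt_reg_r (/ w))|apply (Rmult_lt_reg_r (/ w))];
        try (apply Rinv_0_lt_compat; lra); field_simplify; lra.
Qed.

Lemma inv_exponents_le (p q : R) : 1 <= p -> p <= q -> 0 < 1 / q <= 1 / p /\ 1 / p <= 1.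
Proof.
  intros Hp Hpq. unfold Rdiv. rewrite !Rmult_1_l. split; [split|].
  - apply Rinv_0_lt_compat. lra.
  - apply Rinv_le_contravar; lra.
  - rewrite <- Rinv_1. apply Rinv_le_contravar; lra.
Qed.

(* [hilbert_kernel (g s) (d s) ((g+d+1) s)] is [k^s] for [k = m^g n^d (m+n)^(-(g+d+1))]; the
   four inequalities are the hypotheses of [sum_homogeneous_kernel_le] for the two weighted
   factors [m^(g-z) n^(d+z) (m+n)^(-(g+d+1))] and [m^(g+zw) n^(d-zw) (m+n)^(-(g+d+1))]. *)
Lemma schur_exponents_exist (p q ga de : R) :
  1 <= p -> p <= q -> 0 < de * q + 1 -> 0 < ga + (1 - 1 / p) ->
  exists g d z, ga = g * (1 - 1 / p + 1 / q) /\ de = d * (1 - 1 / p + 1 / q) /\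
    -1 < g - z /\ 0 < d + z /\ -1 < d - z * ((1 - 1 / p) * q) /\ 0 < g + z * ((1 - 1 / p) * q).
Proof.
  intros Hp Hpq Hde Hga. destruct (inv_exponents_le p q Hp Hpq) as [[Hq0 Hqp] Hp1].
  set (th := 1 - 1 / p). set (s := th + 1 / q). set (w := th * q).
  assert (Hs : 0 < s) by (unfold s, th; lra).
  assert (Hw : 0 <= w) by (unfold w, th; apply Rmult_le_pos; lra).
  assert (H1w : 1 + w = q * s) by (unfold w, s; field; lra).
  exists (ga / s), (de / s).
  assert (Hd1 : de / s * (1 + w) = de * q) by (rewrite H1w; field; lra).
  assert (Hg1 : ga / s * (1 + w) = ga * q) by (rewrite H1w; field; lra).
  assert (Hc : - (de / s) < ga / s + 1).
  { assert (0 < de + 1 / q)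
      by (replace (de + 1 / q) with ((de * q + 1) / q) by (field; lra); apply Rdiv_lt_0_compat; lra).
    apply (Rmult_lt_reg_r s); [lra|]. field_simplify; unfold s, th in *; lra. }
  destruct (schur_exponent_exists (ga / s) (de / s) w Hw Hc) as [z [Hz1 Hz2]].
  { rewrite Ropp_mult_distr_l_reverse, Hd1. lra. }
  { rewrite Ropp_mult_distr_l_reverse, Hg1. unfold w.
    assert (0 < q * (ga + th)) by (apply Rmult_lt_0_compat; unfold th; lra). lra. }
  exists z. repeat split; try lra; field; lra.
Qed.

Lemma hilbert_kernel_holder_split (q th r s g d c z m n b : R) :
  q <> 0 -> s = th + 1 / q -> 0 <= b ->
  hilbert_kernel (g * s) (d * s) (c * s) m n * rpow b (1 / q + r)
  = rpow (Rpower m (g + z * (th * q)) * Rpower n (d - z * (th * q)) * Rpower (m + n) (- c) * b)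
         (1 / q)
    * rpow (Rpower m (g - z) * Rpower n (d + z) * Rpower (m + n) (- c)) th * rpow b r.
Proof.
  intros Hq Hs Hb.
  assert (Hmono : forall x y w a1 b1 c1, 0 < Rpower x a1 * Rpower y b1 * Rpower w c1)
    by (intros; repeat apply Rmult_lt_0_compat; apply Rpower_gt0).
  rewrite rpow_mult_distr by (exact Hb || (left; apply Hmono)).
  rewrite (rpow_Rpower (Rpower m (g + _) * _ * _)), (rpow_Rpower (Rpower m (g - z) * _ * _)),
    !Rpower_monomial, rpow_plus by (exact Hb || apply Hmono).
  unfold hilbert_kernel. subst s.
  replace (g * (th + 1 / q)) with ((g + z * (th * q)) * (1 / q) + (g - z) * th) by (field; lra).
  replace (d * (th + 1 / q)) with ((d - z * (th * q)) * (1 / q) + (d + z) * th) by (field; lra).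
  replace (- (c * (th + 1 / q))) with (- c * (1 / q) + - c * th) by (field; lra).
  rewrite !Rpower_plus. ring.
Qed.

Lemma hilbert_kernel_lq_bound (p q ga de la : R) :
  1 <= p -> p <= q -> la = ga + de + (1 - 1 / p + 1 / q) ->
  0 < de * q + 1 -> 0 < ga + (1 - 1 / p) ->
  exists C, 0 <= C /\ forall b : nat -> R, (forall k, 0 <= b k) -> ex_series b ->
    (forall j, ex_series (fun k => hilbert_kernel ga de la (INR (S k)) (INR (S j)) * rpow (b k) (1 / p))) /\
    forall N, sum_n (fun j => rpow (Series (fun k =>
                hilbert_kernel ga de la (INR (S k)) (INR (S j)) * rpow (b k) (1 / p))) q) N
              <= C * rpow (Series b) (q / p).
Proof.
  intros Hp Hpq Hla Hde Hga. destruct (inv_exponents_le p q Hp Hpq) as [[Hq0 Hqp] Hp1].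
  set (th := 1 - 1 / p). set (r := 1 / p - 1 / q). set (w := th * q).
  destruct (schur_exponents_exist p q ga de Hp Hpq Hde Hga)
    as (g & d & z & Hg & Hd & Hv1 & Hv2 & Hu1 & Hu2).
  fold th w in Hg, Hd, Hu1, Hu2.
  set (c := g + d + 1).
  destruct (sum_homogeneous_kernel_le (g - z) (d + z) Hv1 Hv2) as [KA [HKA HA]].
  destruct (sum_homogeneous_kernel_le (d - z * w) (g + z * w) Hu1 Hu2) as [KX [HKX HX]].
  replace (g - z + (d + z) + 1) with c in HA by (unfold c; ring).
  replace (d - z * w + (g + z * w) + 1) with c in HX by (unfold c; ring).
  exists (rpow KA (th * q) * KX). split; [apply Rmult_le_pos; [apply rpow_ge0 | lra]|].
  intros b Hb Hbex.
  set (u := fun k j => Rpower (INR (S k)) (g + z * w) * Rpower (INR (S j)) (d - z * w)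
                       * Rpower (INR (S k) + INR (S j)) (- c) * b k).
  set (v := fun k j => Rpower (INR (S k)) (g - z) * Rpower (INR (S j)) (d + z)
                       * Rpower (INR (S k) + INR (S j)) (- c)).
  assert (Hfactor : forall k j, hilbert_kernel ga de la (INR (S k)) (INR (S j)) * rpow (b k) (1 / p)
                                = rpow (u k j) (1 / q) * rpow (v k j) th * rpow (b k) r).
  { intros k j. replace la with (c * (th + 1 / q)) by (rewrite Hla, Hg, Hd; unfold c, th; ring).
    rewrite Hg, Hd. replace (1 / p) with (1 / q + r) by (unfold r; ring).
    apply hilbert_kernel_holder_split; [lra | unfold th; ring | apply Hb]. }
  destruct (holder_schur_bound q th r KA KX u v b) as [Hex Hbound]; auto; try (unfold th, r; lra).
  - intros k j. apply Rmult_le_pos; [left; repeat apply Rmult_lt_0_compat; apply Rpower_gt0 | apply Hb].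
  - intros k j. left. repeat apply Rmult_lt_0_compat; apply Rpower_gt0.
  - intros j M. apply HA. lia.
  - intros k N. unfold u.
    rewrite (sum_n_ext _ (fun j => b k * (Rpower (INR (S j)) (d - z * w) * Rpower (INR (S k)) (g + z * w)
               * Rpower (INR (S j) + INR (S k)) (- c))))
      by (intros; rewrite (Rplus_comm (INR (S k))); simpl; ring).
    rewrite sum_n_Rmult_l, Rmult_comm. apply Rmult_le_compat_r; [apply Hb | apply HX; lia].
  - split.
    + intros j. eapply ex_series_ext; [|apply (Hex j)]. intros k. symmetry. apply Hfactor.
    + intros N. replace (q / p) with (r * q + 1) by (unfold r; field; lra).
      eapply Rle_trans; [|apply (Hbound N)]. right.
      apply sum_n_ext. intros j. f_equal. apply Series_ext. intros k. apply Hfactor.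
Qed.

(** * Boundedness of the operator *)

Lemma wterm_ge0 (p theta : R) (a : nat -> R) (k : nat) : 0 <= wterm p theta a k.
Proof. apply Rmult_le_pos; [left; apply Rpower_gt0 | apply rpow_ge0]. Qed.

Lemma H_term_eq (lam mu nu : R) (a : nat -> R) (n k : nat) :
  H_term lam mu nu a n k
  = Rpower (INR (S k)) mu * Rpower (INR n) nu * Rpower (INR (S k) + INR n) (- lam) * a (S k).
Proof. unfold H_term, Rdiv. now rewrite Rpower_Ropp. Qed.

Lemma H_term_abs_le (p q lam mu nu alpha beta ga : R) (a : nat -> R) (j k : nat) :
  0 < p -> 0 < q -> mu <= ga + alpha / p ->
  Rabs (H_term lam mu nu a (S j) k)
  <= Rpower (INR (S j)) (- beta / q)
     * (hilbert_kernel ga (nu + beta / q) lam (INR (S k)) (INR (S j))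
        * rpow (wterm p alpha a k) (1 / p)).
Proof.
  intros Hp Hq Hmu. set (m := INR (S k)). set (n := INR (S j)).
  assert (Hm : 1 <= m) by (unfold m; rewrite S_INR; pose proof (pos_INR k); lra).
  assert (Hwp : rpow (wterm p alpha a k) (1 / p) = Rpower m (alpha / p) * Rabs (a (S k))).
  { unfold wterm. fold m.
    rewrite rpow_mult_distr, rpow_Rpower, Rpower_mult, rpow_rpow by
      (try apply Rabs_pos; try apply rpow_ge0; try apply Rpower_gt0; left; apply Rpower_gt0).
    replace (p * (1 / p)) with 1 by (field; lra). rewrite rpow_1 by apply Rabs_pos.
    do 2 f_equal. field. lra. }
  assert (Hn : Rpower n (- beta / q) * Rpower n (nu + beta / q) = Rpower n nu)
    by (rewrite <- Rpower_plus; f_equal; field; lra).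
  assert (Hmu' : Rpower m mu <= Rpower m ga * Rpower m (alpha / p))
    by (rewrite <- Rpower_plus; now apply Rle_Rpower).
  rewrite Hwp, H_term_eq. fold m n. unfold hilbert_kernel.
  pose proof (Rpower_gt0 m mu). pose proof (Rpower_gt0 n nu).
  pose proof (Rpower_gt0 (m + n) (- lam)).
  rewrite Rabs_mult, (Rabs_pos_eq (_ * _ * _)) by (apply Rmult_le_pos; [apply Rmult_le_pos|]; lra).
  apply Rle_trans with
    (Rpower m ga * Rpower m (alpha / p) * Rpower n nu * Rpower (m + n) (- lam) * Rabs (a (S k))).
  - repeat apply Rmult_le_compat_r; try lra. apply Rabs_pos.
  - rewrite <- Hn. right. ring.
Qed.

Lemma H_bounded_of_sum_bound (lam mu nu p alpha q beta C : R) :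
  0 < p -> 0 < q -> 0 <= C ->
  (forall a, in_lp p alpha a ->
     (forall j, ex_series (H_term lam mu nu a (S j))) /\
     forall N, sum_n (wterm q beta (Hop lam mu nu a)) N
               <= C * rpow (Series (wterm p alpha a)) (q / p)) ->
  H_bounded lam mu nu p alpha q beta.
Proof.
  intros Hp Hq HC Hbound. split.
  - intros a Ha. destruct (Hbound a Ha) as [Hex Hsum]. split.
    + intros [|j] Hj; [lia | apply Hex].
    + exact (ex_series_of_sum_n_le _ _ (wterm_ge0 q beta _) Hsum).
  - exists (rpow C (1 / q)). intros a Ha. destruct (Hbound a Ha) as [_ Hsum].
    assert (HS : 0 <= Series (wterm p alpha a)) by (apply Series_ge0; [apply wterm_ge0 | exact Ha]).
    unfold lp_norm. eapply Rle_trans.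
    + apply rpow_le_compat; [apply Rlt_le, Rdiv_lt_0_compat; lra|]. split.
      * apply Series_ge0; [apply wterm_ge0|].
        exact (ex_series_of_sum_n_le _ _ (wterm_ge0 q beta _) Hsum).
      * exact (Series_le_of_sum_n_le _ _ (wterm_ge0 q beta _) Hsum).
    + rewrite rpow_mult_distr, rpow_rpow by (auto; apply rpow_ge0).
      replace (q / p * (1 / q)) with (1 / p) by (field; lra). lra.
Qed.

Lemma Hop_wterm_le (p q lam mu nu alpha beta ga : R) (a : nat -> R) (j : nat) :
  0 < p -> 0 < q -> mu <= ga + alpha / p ->
  ex_series (fun k => hilbert_kernel ga (nu + beta / q) lam (INR (S k)) (INR (S j))
                      * rpow (wterm p alpha a k) (1 / p)) ->
  ex_series (H_term lam mu nu a (S j)) /\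
  wterm q beta (Hop lam mu nu a) j
  <= rpow (Series (fun k => hilbert_kernel ga (nu + beta / q) lam (INR (S k)) (INR (S j))
                            * rpow (wterm p alpha a k) (1 / p))) q.
Proof.
  intros Hp Hq Hmu Hex.
  set (F := fun k => hilbert_kernel ga (nu + beta / q) lam (INR (S k)) (INR (S j))
                     * rpow (wterm p alpha a k) (1 / p)).
  set (n := INR (S j)).
  assert (HF : forall k, Rabs (H_term lam mu nu a (S j) k) <= Rpower n (- beta / q) * F k)
    by (intros k; exact (H_term_abs_le p q lam mu nu alpha beta ga a j k Hp Hq Hmu)).
  assert (Hex_abs : ex_series (fun k => Rabs (H_term lam mu nu a (S j) k))).
  { apply (ex_series_le_nonneg _ (fun k => Rpower n (- beta / q) * F k)).
    - intros k. split; [apply Rabs_pos | apply HF].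
    - apply (ex_series_scal_l _ _ Hex). }
  assert (HHop : Rabs (Hop lam mu nu a (S j)) <= Rpower n (- beta / q) * Series F).
  { unfold Hop. eapply Rle_trans; [apply Series_Rabs, Hex_abs|].
    rewrite <- Series_scal_l. apply Series_le; [|apply (ex_series_scal_l _ _ Hex)].
    intros k. split; [apply Rabs_pos | apply HF]. }
  assert (HFs : 0 <= Series F).
  { apply Series_ge0; [|exact Hex]. intros k. apply Rmult_le_pos; [|apply rpow_ge0].
    unfold hilbert_kernel. left. repeat apply Rmult_lt_0_compat; apply Rpower_gt0. }
  split; [apply ex_series_Rabs, Hex_abs|].
  unfold wterm. fold n. eapply Rle_trans.
  - apply Rmult_le_compat_l; [left; apply Rpower_gt0|].
    apply rpow_le_compat; [lra|]. split; [apply Rabs_pos | exact HHop].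
  - rewrite rpow_mult_distr by (auto; left; apply Rpower_gt0).
    rewrite rpow_Rpower, Rpower_mult, <- Rmult_assoc, <- Rpower_plus by apply Rpower_gt0.
    replace (beta + - beta / q * q) with 0 by (field; lra).
    rewrite Rpower_O, Rmult_1_l by apply INR_S_gt0. apply Rle_refl.
Qed.

Lemma H_bounded_of_exponents (p q lam mu nu alpha beta : R) :
  1 <= p -> p <= q -> beta + 1 > - q * nu ->
  lam >= mu + nu + 1 + (beta + 1) / q - (alpha + 1) / p -> beta + 1 < q * (lam - nu) ->
  H_bounded lam mu nu p alpha q beta.
Proof.
  intros Hp Hpq Hnu Hlam Hbeta. assert (Hp' : 0 < p) by lra. assert (Hq : 0 < q) by lra.
  set (de := nu + beta / q). set (ga := lam - de - (1 - 1 / p + 1 / q)).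
  assert (Hmu : mu <= ga + alpha / p).
  { replace (ga + alpha / p) with (lam - (nu + 1 + (beta + 1) / q - (alpha + 1) / p))
      by (unfold ga, de; field; lra). lra. }
  destruct (hilbert_kernel_lq_bound p q ga de lam) as [C [HC Hker]];
    [lra | lra | unfold ga; ring | | |].
  { unfold de. replace ((nu + beta / q) * q + 1) with (nu * q + beta + 1) by (field; lra). lra. }
  { unfold ga, de. replace (lam - (nu + beta / q) - (1 - 1 / p + 1 / q) + (1 - 1 / p))
      with ((q * (lam - nu) - (beta + 1)) / q) by (field; lra).
    apply Rdiv_lt_0_compat; lra. }
  apply (H_bounded_of_sum_bound _ _ _ _ _ _ _ C); [lra | lra | exact HC |].
  intros a Ha. destruct (Hker (wterm p alpha a) (wterm_ge0 p alpha a) Ha) as [Hex Hsum].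
  split.
  - intros j. exact (proj1 (Hop_wterm_le p q lam mu nu alpha beta ga a j Hp' Hq Hmu (Hex j))).
  - intros N. eapply Rle_trans; [|apply (Hsum N)]. apply sum_n_m_le. intros j.
    exact (proj2 (Hop_wterm_le p q lam mu nu alpha beta ga a j Hp' Hq Hmu (Hex j))).
Qed.

Lemma H_term_ge0 (lam mu nu : R) (a : nat -> R) (n k : nat) :
  0 <= a (S k) -> 0 <= H_term lam mu nu a n k.
Proof.
  intros Ha. rewrite H_term_eq. apply Rmult_le_pos; [|exact Ha].
  left. repeat apply Rmult_lt_0_compat; apply Rpower_gt0.
Qed.

Lemma not_in_lp_of_ge (q beta e c : R) (f : nat -> R) :
  0 < q -> 0 < c -> -1 <= beta + q * e ->
  (forall j, c * Rpower (INR (S j)) e <= f (S j)) -> ~ in_lp q beta f.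
Proof.
  intros Hq Hc He Hf. apply (harmonic_not_ex_series _ (Rpower c q) (Rpower_gt0 c q)).
  intros j. set (n := INR (S j)).
  assert (Hn : 1 <= n) by (unfold n; rewrite S_INR; pose proof (pos_INR j); lra).
  assert (Hcn : 0 < c * Rpower n e) by (apply Rmult_lt_0_compat; [exact Hc | apply Rpower_gt0]).
  unfold wterm. fold n. apply Rle_trans with (Rpower n beta * rpow (c * Rpower n e) q).
  2:{ apply Rmult_le_compat_l; [left; apply Rpower_gt0|].
      apply rpow_le_compat; [lra|]. split; [lra|].
      eapply Rle_trans; [apply Hf | apply Rle_abs]. }
  rewrite rpow_Rpower, <- Rpower_mult_distr, Rpower_mult by (auto; apply Rpower_gt0).
  assert (Hpow : Rpower n (- (1)) <= Rpower n (beta + e * q)) by (apply Rle_Rpower; lra).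
  rewrite Rpower_Ropp, Rpower_1 in Hpow by lra.
  pose proof (Rpower_gt0 c q).
  apply Rle_trans with (Rpower c q * Rpower n (beta + e * q)).
  - unfold Rdiv. apply Rmult_le_compat_l; lra.
  - rewrite Rpower_plus. right. ring.
Qed.

Lemma H_bounded_beta_lt (p q lam mu nu alpha beta : R) :
  0 < q -> H_bounded lam mu nu p alpha q beta -> beta + 1 < q * (lam - nu).
Proof.
  intros Hq [Hmap _]. apply Rnot_le_lt. intros Hge.
  set (a := fun m : nat => if Nat.eqb m 1 then 1 else 0).
  assert (Hin : in_lp p alpha a).
  { apply (ex_series_of_sum_n_le _ 1 (wterm_ge0 p alpha a)).
    apply (sum_n_le_telescoping _ (fun _ => 1)).
    - unfold wterm, a. simpl. rewrite Rabs_R1, rpow_Rpower, !Rpower_base_1 by lra. lra.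
    - intros k. unfold wterm, a. simpl. rewrite Rabs_R0, rpow_0_l. lra. }
  destruct (Hmap a Hin) as [Hex Hlq].
  refine (not_in_lp_of_ge q beta (nu - lam) (/ Rpower 2 (Rabs lam)) _ Hq _ _ _ Hlq).
  { apply Rinv_0_lt_compat, Rpower_gt0. }
  { lra. }
  intros j. set (n := INR (S j)). assert (Hn : 0 < n) by apply INR_S_gt0.
  assert (Hn1 : 1 <= n) by (unfold n; rewrite S_INR; pose proof (pos_INR j); lra).
  eapply Rle_trans.
  2:{ unfold Hop. apply (sum_n_le_Series _ (fun k => H_term_ge0 lam mu nu a (S j) k
                                              ltac:(unfold a; destruct (Nat.eqb (S k) 1); lra))).
      - apply Hex. lia. }
  rewrite sum_O, H_term_eq. unfold a. simpl (Nat.eqb 1 1). simpl (INR 1).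
  rewrite Rpower_base_1. fold n.
  pose proof (Rpower_comparable_l 2 n (1 + n) (- lam) Hn ltac:(lra)) as Hcmp.
  rewrite Rabs_Ropp in Hcmp.
  pose proof (Rpower_gt0 2 (Rabs lam)). pose proof (Rpower_gt0 n nu).
  unfold Rminus. rewrite Rpower_plus.
  apply (Rmult_le_reg_l (Rpower 2 (Rabs lam))); [lra|].
  rewrite <- Rmult_assoc, Rinv_r, Rmult_1_l by lra.
  apply Rle_trans with (Rpower n nu * (Rpower 2 (Rabs lam) * Rpower (1 + n) (- lam)));
    [apply Rmult_le_compat_l; lra | right; ring].
Qed.

Lemma H_bounded_lam_ge (p q lam mu nu alpha beta : R) :
  0 < p -> 0 < q -> H_bounded lam mu nu p alpha q beta ->
  lam >= mu + nu + 1 + (beta + 1) / q - (alpha + 1) / p.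
Proof.
  intros Hp Hq [Hmap _]. apply Rnot_lt_ge. intros Hlt.
  set (eps := mu + nu + 1 + (beta + 1) / q - (alpha + 1) / p - lam).
  assert (Heps : 0 < eps) by (unfold eps; lra).
  (* [m^alpha a_m^p = m^(-1 - p eps)] is summable, while [H a (n)] is at least of order
     [n^(-(beta+1)/q)] *)
  set (e0 := - (alpha + 1) / p - eps). set (a := fun m : nat => Rpower (INR m) e0).
  assert (Hin : in_lp p alpha a).
  { apply (ex_series_of_sum_n_le _ (1 - 1 / (- p * eps)) (wterm_ge0 p alpha a)). intros N.
    erewrite sum_n_ext; [apply (sum_Rpower_le (- p * eps)); nra|]. intros k.
    unfold wterm, a. rewrite Rabs_pos_eq, rpow_Rpower, Rpower_mult, <- Rpower_plus
      by (try left; apply Rpower_gt0).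
    f_equal. unfold e0. field. lra. }
  destruct (Hmap a Hin) as [Hex Hlq].
  destruct (sum_kernel_ge (mu + e0) lam) as [c0 [Hc0 Hblock]].
  refine (not_in_lp_of_ge q beta (nu + (mu + e0 - lam + 1)) c0 _ Hq Hc0 _ _ Hlq).
  { right. unfold e0, eps. field. lra. }
  intros j. set (n := INR (S j)).
  eapply Rle_trans.
  2:{ unfold Hop. apply (sum_n_le_Series _ (fun k => H_term_ge0 lam mu nu a (S j) k
                                              ltac:(left; apply Rpower_gt0))).
      - apply Hex. lia. }
  rewrite (sum_n_ext _ (fun k => Rpower n nu
             * (Rpower (INR (S k)) (mu + e0) * Rpower (INR (S k) + n) (- lam)))).
  2:{ intros k. rewrite H_term_eq, Rpower_plus. unfold a. fold n. simpl. ring. }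
  rewrite sum_n_Rmult_l, Rpower_plus. pose proof (Rpower_gt0 n nu).
  apply Rle_trans with (Rpower n nu * (c0 * Rpower n (mu + e0 - lam + 1))); [right; ring|].
  apply Rmult_le_compat_l; [lra | apply Hblock].
Qed.

Theorem theorem1p6 (p q lam mu nu alpha beta : R) :
  1 <= p -> p <= q -> beta + 1 > - q * nu ->
  (H_bounded lam mu nu p alpha q beta <->
   (lam >= mu + nu + 1 + (beta + 1) / q - (alpha + 1) / p /\
    beta + 1 < q * (lam - nu))).
Proof.
  intros Hp Hpq Hnu. split.
  - intros Hbd. split.
    + exact (H_bounded_lam_ge p q lam mu nu alpha beta ltac:(lra) ltac:(lra) Hbd).
    + exact (H_bounded_beta_lt p q lam mu nu alpha beta ltac:(lra) Hbd).
  - intros [Hlam Hbeta]. exact (H_bounded_of_exponents p q lam mu nu alpha beta Hp Hpq Hnu Hlam Hbeta).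
Qed.
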